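(* Let $G=(V,E,\mu,\omega)$ be a weighted graph with a fixed reference vertex $p\in V$, and suppose there exist constants $D>0$ and $0\le\alpha\le 2$ such that $\mathrm{Deg}(x)\le D\,d(x,p)^{\alpha}$ for all $x\in V$, $x\neq p$. Let $T\in(0,\infty]$. Suppose $u,v\in\mathcal{M}_T$ are both solutions of the wave equation on $(-T,T)\times V$ with the same data $f,g,h$, i.e. $u,v\in C^2_t((-T,T)\times V)$ and for $w\in\{u,v\}$: $$\partial_t^2 w(t,x)-\Delta w(t,x)=f(t,x)\ \ ((t,x)\in(-T,T)\times V),\qquad w(0,x)=g(x),\ \ \partial_t w(0,x)=h(x)\ \ (x\in V),$$ where $f\in C^0_t((-T,T)\times V)$ and $g,h:V\to\mathbb{R}$. Then $u\equiv v$.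
   Context: A weighted graph $G=(V,E,\mu,\omega)$ consists of a locally finite, connected, simple, undirected graph $(V,E)$, a symmetric edge weight $\omega:E\to(0,\infty)$, $\{x,y\}\mapsto\omega_{xy}=\omega_{yx}$, and a vertex weight $\mu:V\to(0,\infty)$. Write $x\sim y$ if $\{x,y\}\in E$; $d(x,y)$ is the combinatorial graph distance. The Laplacian is $\Delta f(x)=\sum_{y\sim x}\frac{\omega_{xy}}{\mu_x}(f(y)-f(x))$ for $f:V\to\mathbb{R}$, and the weighted degree is $\mathrm{Deg}(x)=\sum_{y\sim x}\frac{\omega_{xy}}{\mu_x}$. For an interval $I$ and $k\in\mathbb{N}_0\cup\{\infty\}$, $u\in C^k_t(I\times V)$ means $u:I\times V\to\mathbb{R}$ and $u(\cdot,x)\in C^k(I)$ for every $x\in V$; $\Delta$ acts in the space variable. For $T\in(0,\infty]$, $\mathcal{M}_T$ is the class of functions $u:(-T,T)\times V\to\mathbb{R}$ for which there is a constant $C$ with $|u(t,x)|\le C\,d(x,p)^{(2-\alpha)d(x,p)}$ for all $(t,x)\in(-T,T)\times V$, $x\neq p$ (with $\alpha$ the exponent in the degree growth condition). *)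

From Stdlib Require Import Reals List.
From Coquelicot Require Import Coquelicot.
Open Scope R_scope.

(* Local finiteness: the neighbours of x are
   exactly the (duplicate-free) finite list [nbrs x]. *)
Inductive walk {V : Type} (nbrs : V -> list V) : nat -> V -> V -> Prop :=
  | walk0 : forall x, walk nbrs 0 x x
  | walkS : forall n x y z, In y (nbrs x) -> walk nbrs n y z -> walk nbrs (S n) x z.

Record wgraph := {
  V : Type;
  nbrs : V -> list V;
  nbrs_nodup : forall x, NoDup (nbrs x);
  nbrs_sym : forall x y, In y (nbrs x) -> In x (nbrs y);
  nbrs_irrefl : forall x, ~ In x (nbrs x);
  connected : forall x y, exists n, walk nbrs n x y;
  omega : V -> V -> R;
  omega_sym : forall x y, In y (nbrs x) -> omega x y = omega y x;
  omega_pos : forall x y, In y (nbrs x) -> 0 < omega x y;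
  mu : V -> R;
  mu_pos : forall x, 0 < mu x
}.

Arguments nbrs {_}.
Arguments omega {_}.
Arguments mu {_}.

Definition adj (G : wgraph) (x y : V G) : Prop := In y (nbrs x).

Definition is_dist (G : wgraph) (x y : V G) (n : nat) : Prop :=
  walk nbrs n x y /\ forall m, walk nbrs m x y -> (n <= m)%nat.

Definition Lap (G : wgraph) (f : V G -> R) (x : V G) : R :=
  fold_right Rplus 0 (map (fun y => omega x y / mu x * (f y - f x)) (nbrs x)).

Definition Deg (G : wgraph) (x : V G) : R :=
  fold_right Rplus 0 (map (fun y => omega x y / mu x) (nbrs x)).

Definition inI (T : Rbar) (t : R) : Prop :=
  Rbar_lt (Rbar_opp T) t /\ Rbar_lt t T.

Definition C0t (G : wgraph) (T : Rbar) (u : R -> V G -> R) : Prop :=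
  forall x t, inI T t -> continuous (fun s => u s x) t.

Definition C2t (G : wgraph) (T : Rbar) (u : R -> V G -> R) : Prop :=
  forall x t, inI T t ->
    ex_derive (fun s => u s x) t /\
    ex_derive (Derive (fun s => u s x)) t /\
    continuous (Derive_n (fun s => u s x) 2) t.

Definition MT (G : wgraph) (p : V G) (alpha : R) (T : Rbar)
  (u : R -> V G -> R) : Prop :=
  exists C : R, forall t x n, inI T t -> x <> p -> is_dist G x p n ->
    Rabs (u t x) <= C * Rpower (INR n) ((2 - alpha) * INR n).

Definition wave_sol (G : wgraph) (T : Rbar) (f : R -> V G -> R)
  (g h : V G -> R) (w : R -> V G -> R) : Prop :=
  C2t G T w /\
  (forall t x, inI T t ->
     Derive_n (fun s => w s x) 2 t - Lap G (w t) x = f t x) /\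
  (forall x, w 0 x = g x) /\
  (forall x, Derive (fun s => w s x) 0 = h x).

(* The difference w = u - v solves the homogeneous equation
   w'' = Delta w with zero Cauchy data at time 0.  Fix a time t and work on the
   segment J between 0 and t, where w obeys a growth bound B (n+1)^((2-alpha)n)
   at every vertex joined to p by a walk of length n.
   1. One-dimensional comparison: if phi(s0) = phi'(s0) = 0 and
      |phi''(r)| <= K (r-s0)^m/m!, then |phi(s)| <= K (s-s0)^(m+2)/(m+2)!.
   2. Since |Delta w(x)| <= 2 Deg(x) max_{y ~ x or y = x} |w(y)| and the walk
      length grows by one per neighbour, iterating (1) k times from a time s0
      with zero data gives |w(s,x)| <= G(n,k) (s-s0)^(2k)/(2k)! with an explicit
      G(n,k) (the walk length n of x is fixed, k is arbitrary).
   3. Since x^m <= m! e^x, this is <= C_n q^k with q < 1 as soon as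
      |s - s0| <= tau(D); letting k -> oo gives w(s,.) = 0 there, and then
      also w'(s,.) = 0.
   4. Stepping from 0 by windows of length tau covers J, so w(t,x) = 0.
   The file proves the real-analysis tools, the graph estimates, the abstract
   vanishing result for a homogeneous solution on a segment (Section
   Vanishing), and finally reduces theorem1p2 to it. *)

From Stdlib Require Import Reals List Lra Lia Psatz Classical Factorial.
From Coquelicot Require Import Coquelicot.
Open Scope R_scope.

(** Elementary real analysis *)

Lemma segment_in (a b s0 s r : R) :
  a <= s0 <= b -> a <= s <= b -> Rmin s0 s <= r <= Rmax s0 s -> a <= r <= b.
Proof. unfold Rmin, Rmax; destruct Rle_dec; lra. Qed.

Lemma segment_dist (s0 s r : R) :
  Rmin s0 s <= r <= Rmax s0 s -> Rabs (r - s0) <= Rabs (s - s0).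
Proof. unfold Rmin, Rmax, Rabs; destruct Rle_dec; repeat destruct Rcase_abs; lra. Qed.

Lemma segment_sub (s0 s c r : R) :
  Rmin s0 s <= c <= Rmax s0 s -> Rmin s0 c <= r <= Rmax s0 c ->
  Rmin s0 s <= r <= Rmax s0 s.
Proof. unfold Rmin, Rmax; repeat destruct Rle_dec; lra. Qed.

Lemma is_derive_continuity_pt (f : R -> R) (x l : R) :
  is_derive f x l -> continuity_pt f x.
Proof.
  intros Hd; apply continuity_pt_filterlim.
  apply (ex_derive_continuous (K:=R_AbsRing) (V:=R_NormedModule) f).
  now exists l.
Qed.

(* A function with F(s0) = F'(s0) = 0 and F'' >= 0 on [s0,s] is >= 0 at s
   (two applications of the mean value theorem). *)
Lemma convex_nonneg (F F1 F2 : R -> R) (s0 s : R) :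
  (forall r, Rmin s0 s <= r <= Rmax s0 s ->
     is_derive F r (F1 r) /\ is_derive F1 r (F2 r) /\ 0 <= F2 r) ->
  F s0 = 0 -> F1 s0 = 0 -> 0 <= F s.
Proof.
  intros H HF HF1.
  destruct (MVT_gen F s0 s F1) as [c [Hc Hmvt]].
  { intros r Hr; apply H; lra. }
  { intros r Hr; apply (is_derive_continuity_pt _ _ (F1 r)), H; auto. }
  destruct (MVT_gen F1 s0 c F2) as [c' [Hc' Hmvt']].
  { intros r Hr; apply H, (segment_sub s0 s c); auto; lra. }
  { intros r Hr; apply (is_derive_continuity_pt _ _ (F2 r)), H.
    now apply (segment_sub s0 s c). }
  assert (HF2 : 0 <= F2 c') by (apply H, (segment_sub s0 s c); auto).
  assert (Hsign : 0 <= (c - s0) * (s - s0))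
    by (revert Hc; unfold Rmin, Rmax; destruct Rle_dec; intros; nra).
  rewrite HF in Hmvt; rewrite HF1 in Hmvt'.
  replace (F s) with (F2 c' * ((c - s0) * (s - s0))) by nra.
  now apply Rmult_le_pos.
Qed.

Lemma is_derive_taylor_monomial (K s0 : R) (n : nat) (r : R) :
  is_derive (fun r => K * (r - s0) ^ S n / INR (fact (S n))) r
            (K * (r - s0) ^ n / INR (fact n)).
Proof.
  pose proof (INR_fact_lt_0 n); pose proof (pos_INR n).
  rewrite fact_simpl, mult_INR, S_INR.
  auto_derive; [easy|].
  change (match n with 0%nat => 1 | S _ => INR n + 1 end) with (INR (S n)).
  rewrite S_INR; replace (r + - s0) with (r - s0) by ring.
  field; lra.
Qed.

Lemma taylor_comparison (phi phi1 phi2 : R -> R) (s0 s K : R) (m : nat) :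
  (forall r, Rmin s0 s <= r <= Rmax s0 s ->
     is_derive phi r (phi1 r) /\ is_derive phi1 r (phi2 r) /\
     Rabs (phi2 r) <= K * (r - s0) ^ m / INR (fact m)) ->
  phi s0 = 0 -> phi1 s0 = 0 ->
  Rabs (phi s) <= K * (s - s0) ^ S (S m) / INR (fact (S (S m))).
Proof.
  intros H H0 H1.
  set (h := fun n r => K * (r - s0) ^ n / INR (fact n)).
  assert (Dh : forall n r, is_derive (h (S n)) r (h n r))
    by (intros; apply is_derive_taylor_monomial).
  assert (Hh0 : forall n, h (S n) s0 = 0)
    by (intros; unfold h; rewrite Rminus_diag, pow_i by lia; unfold Rdiv; ring).
  assert (Hplus : 0 <= h (S (S m)) s + phi s).
  { apply (convex_nonneg (fun r => h (S (S m)) r + phi r) (fun r => h (S m) r + phi1 r) (fun r => h m r + phi2 r) s0 s).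
    - intros r Hr; destruct (H r Hr) as [D1 [D2 B]]; refine (conj _ (conj _ _)).
      + exact (is_derive_plus _ _ _ _ _ (Dh (S m) r) D1).
      + exact (is_derive_plus _ _ _ _ _ (Dh m r) D2).
      + pose proof (Rabs_Ropp (phi2 r)); pose proof (Rle_abs (- phi2 r)).
        unfold h; lra.
    - now rewrite Hh0, H0, Rplus_0_r.
    - now rewrite Hh0, H1, Rplus_0_r. }
  assert (Hminus : 0 <= h (S (S m)) s - phi s).
  { apply (convex_nonneg (fun r => h (S (S m)) r - phi r) (fun r => h (S m) r - phi1 r) (fun r => h m r - phi2 r) s0 s).
    - intros r Hr; destruct (H r Hr) as [D1 [D2 B]]; refine (conj _ (conj _ _)).
      + exact (is_derive_minus _ _ _ _ _ (Dh (S m) r) D1).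
      + exact (is_derive_minus _ _ _ _ _ (Dh m r) D2).
      + pose proof (Rle_abs (phi2 r)); unfold h; lra.
    - now rewrite Hh0, H0, Rminus_0_r.
    - now rewrite Hh0, H1, Rminus_0_r. }
  apply Rabs_le; unfold h in *; lra.
Qed.

Lemma even_pow_nonneg (x : R) (k : nat) : 0 <= x ^ (2 * k).
Proof. rewrite pow_mult; apply pow_le; nra. Qed.

Lemma Rpower_mono (b1 b2 e1 e2 : R) :
  1 <= b1 <= b2 -> e1 <= e2 -> 0 <= e2 -> Rpower b1 e1 <= Rpower b2 e2.
Proof.
  intros Hb He He2. apply Rle_trans with (Rpower b1 e2).
  - now apply Rle_Rpower.
  - apply Rle_Rpower_l; lra.
Qed.

Lemma Rpower_ge_1 (b e : R) : 1 <= b -> 0 <= e -> 1 <= Rpower b e.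
Proof.
  intros Hb He. rewrite <- (Rpower_O b) at 1 by lra. now apply Rle_Rpower.
Qed.

Lemma exp_mult_INR (a : R) (m : nat) : exp (INR m * a) = exp a ^ m.
Proof.
  induction m as [|m IH].
  - now rewrite Rmult_0_l, exp_0.
  - now rewrite S_INR, Rmult_plus_distr_r, Rmult_1_l, exp_plus, IH, Rmult_comm.
Qed.

(* x^m <= m! e^x for x >= 0: one term of the exponential series. *)
Lemma pow_le_fact_exp (x : R) (m : nat) : 0 <= x -> x ^ m <= INR (fact m) * exp x.
Proof.
  intros Hx. pose proof (INR_fact_lt_0 m).
  assert (Hterm : x ^ m / INR (fact m) <=
                  sum_f_R0 (fun k => x ^ k / INR (fact k)) m).
  { destruct m as [|m]; [apply Rle_refl|]; rewrite tech5.
    assert (0 <= sum_f_R0 (fun k => x ^ k / INR (fact k)) m); [|lra].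
    apply cond_pos_sum; intros k.
    apply Rdiv_le_0_compat; [now apply pow_le | apply INR_fact_lt_0]. }
  pose proof (exp_ge_taylor x m Hx).
  apply (Rmult_le_reg_r (/ INR (fact m))); [now apply Rinv_0_lt_compat|].
  replace (INR (fact m) * exp x * / INR (fact m)) with (exp x) by (field; lra).
  unfold Rdiv in Hterm; lra.
Qed.

Lemma geometric_domination (z c q : R) (N : nat) :
  0 <= q < 1 -> 0 <= c -> (forall k, (N <= k)%nat -> z <= c * q ^ k) -> z <= 0.
Proof.
  intros Hq Hc H. destruct (Rle_lt_dec z 0) as [|Hz]; auto. exfalso.
  destruct (pow_lt_1_zero q ltac:(rewrite Rabs_right; lra) (z / (c + 1)))
    as [N' HN']; [apply Rdiv_lt_0_compat; lra|].
  specialize (HN' (Nat.max N N') ltac:(lia)); specialize (H (Nat.max N N') ltac:(lia)).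
  rewrite Rabs_right in HN' by (apply Rle_ge, pow_le; lra).
  assert (c * q ^ Nat.max N N' <= c * (z / (c + 1))) by (apply Rmult_le_compat_l; lra).
  assert (c * (z / (c + 1)) < z)
    by (apply Rmult_lt_reg_r with (c + 1); [lra|]; field_simplify; nra).
  lra.
Qed.

(** The Laplacian and walks *)

Lemma weighted_sum_bound {A : Type} (c g : A -> R) (M : R) (l : list A) :
  (forall y, In y l -> 0 <= c y /\ Rabs (g y) <= M) ->
  Rabs (fold_right Rplus 0 (map (fun y => c y * g y) l)) <=
  M * fold_right Rplus 0 (map c l).
Proof.
  induction l as [|y l IH]; simpl; intros H.
  - rewrite Rabs_R0; lra.
  - destruct (H y (or_introl eq_refl)) as [Hc Hg].
    pose proof (IH (fun z Hz => H z (or_intror Hz))).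
    eapply Rle_trans; [apply Rabs_triang|].
    rewrite Rabs_mult, (Rabs_pos_eq (c y)) by lra.
    pose proof (Rmult_le_compat_l _ _ _ Hc Hg); lra.
Qed.

Lemma Lap_bound (G : wgraph) (f : V G -> R) (x : V G) (M : R) :
  (forall y, adj G x y -> Rabs (f y) <= M) -> Rabs (f x) <= M ->
  Rabs (Lap G f x) <= 2 * M * Deg G x.
Proof.
  intros Hy Hx. unfold Lap, Deg.
  apply (weighted_sum_bound (fun y => omega x y / mu x) (fun y => f y - f x)).
  intros y Hin; split.
  - left; apply Rdiv_lt_0_compat; [now apply omega_pos | apply mu_pos].
  - eapply Rle_trans; [apply Rabs_triang|]; rewrite Rabs_Ropp.
    pose proof (Hy y Hin); lra.
Qed.

Lemma Lap_zero (G : wgraph) (f : V G -> R) (x : V G) :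
  (forall z, f z = 0) -> Lap G f x = 0.
Proof.
  intros H. apply Rabs_eq_0, Rle_antisym; [|apply Rabs_pos].
  replace 0 with (2 * 0 * Deg G x) by ring.
  apply Lap_bound; intros; rewrite H, Rabs_R0; lra.
Qed.

Lemma Lap_minus (G : wgraph) (f g : V G -> R) (x : V G) :
  Lap G (fun y => f y - g y) x = Lap G f x - Lap G g x.
Proof.
  unfold Lap; induction (nbrs x) as [|y l IH]; simpl; [ring|].
  rewrite IH; ring.
Qed.

Lemma walk_adj (G : wgraph) (x y p : V G) (n : nat) :
  adj G x y -> walk nbrs n x p -> walk nbrs (S n) y p.
Proof. intros H W; apply walkS with x; auto; now apply nbrs_sym. Qed.

Lemma walk_dist (G : wgraph) (y p : V G) (n : nat) :
  y <> p -> walk nbrs n y p -> exists d, (1 <= d <= n)%nat /\ is_dist G y p d.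
Proof.
  intros Hyp. induction n as [n IH] using (well_founded_induction Wf_nat.lt_wf).
  intros W.
  destruct (classic (exists m, (m < n)%nat /\ walk nbrs m y p)) as [[m [Hm Wm]]|Hmin].
  - destruct (IH m Hm Wm) as [d [Hd Hdist]]. exists d; split; auto; lia.
  - exists n; repeat split; auto.
    + destruct n; [inversion W; contradiction | lia].
    + intros m Wm. destruct (Nat.le_gt_cases n m); auto.
      exfalso; apply Hmin; now exists m.
Qed.

(** Vanishing of a homogeneous solution with controlled growth *)

Definition wave_system (G : wgraph) (a b : R) (w W1 : R -> V G -> R) : Prop :=
  forall x r, a <= r <= b ->
    is_derive (fun s => w s x) r (W1 r x) /\
    is_derive (fun s => W1 s x) r (Lap G (w r) x).

(* The constant in the k-fold iterated estimate at walk-distance n: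
   G(n,k) = B (2D)^k (n+k+1)^(2k + (2-alpha) n). *)
Definition iter_bound (B D alpha : R) (n k : nat) : R :=
  B * (2 * D) ^ k * Rpower (INR n + INR k + 1) (2 * INR k + (2 - alpha) * INR n).

(* Length of a time window on which the estimate forces vanishing. *)
Definition tau (D : R) : R := / (2 * exp 1 ^ 2 * (D + 1)).

Section Vanishing.

Variables (G : wgraph) (p : V G) (a b alpha B D : R) (w W1 : R -> V G -> R).
Hypothesis Halpha : 0 <= alpha <= 2.
Hypothesis HB : 0 <= B.
Hypothesis HD : 0 <= D.
Hypothesis Hwave : wave_system G a b w W1.
Hypothesis Hgrowth : forall x n r, walk nbrs n x p -> a <= r <= b ->
  Rabs (w r x) <= B * Rpower (INR n + 1) ((2 - alpha) * INR n).
Hypothesis Hdeg : forall x n, walk nbrs n x p ->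
  Deg G x <= D * Rpower (INR n + 1) alpha.

Lemma iter_bound_nonneg (n k : nat) : 0 <= iter_bound B D alpha n k.
Proof.
  unfold iter_bound. apply Rmult_le_pos; [apply Rmult_le_pos, pow_le; lra|].
  unfold Rpower; left; apply exp_pos.
Qed.

Lemma iter_bound_mono (n k : nat) :
  iter_bound B D alpha n k <= iter_bound B D alpha (S n) k.
Proof.
  unfold iter_bound; rewrite S_INR. pose proof (pos_INR n); pose proof (pos_INR k).
  apply Rmult_le_compat_l; [apply Rmult_le_pos, pow_le; lra|].
  apply Rpower_mono; nra.
Qed.

(* One iteration: the degree factor 2 Deg(x) costs one power of 2D and two
   powers of the base, and moves to walk-distance n. *)
Lemma iter_bound_step (n k : nat) (dx : R) :
  dx <= D * Rpower (INR n + 1) alpha ->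
  2 * dx * iter_bound B D alpha (S n) k <= iter_bound B D alpha n (S k).
Proof.
  intros Hdx. pose proof (pos_INR n); pose proof (pos_INR k).
  set (X := INR n + INR k + 1 + 1).
  assert (HX : 1 <= X) by (unfold X; lra).
  assert (Hdx' : dx <= D * Rpower X alpha).
  { eapply Rle_trans; [apply Hdx|]. apply Rmult_le_compat_l; auto.
    apply Rle_Rpower_l; unfold X; lra. }
  pose proof (iter_bound_nonneg (S n) k).
  apply Rle_trans with (2 * (D * Rpower X alpha) * iter_bound B D alpha (S n) k);
    [nra|].
  unfold iter_bound; rewrite !S_INR.
  replace (INR n + 1 + INR k + 1) with X by (unfold X; ring).
  replace (INR n + (INR k + 1) + 1) with X by (unfold X; ring).
  right; simpl pow.
  replace (2 * (INR k + 1) + (2 - alpha) * INR n)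
    with (alpha + (2 * INR k + (2 - alpha) * (INR n + 1))) by ring.
  rewrite (Rpower_plus alpha _ X); ring.
Qed.

Lemma tau_pos : 0 < tau D.
Proof. unfold tau; pose proof (exp_pos 1); apply Rinv_0_lt_compat; nra. Qed.

Section FromZeroData.

Variable s0 : R.
Hypothesis Hs0 : a <= s0 <= b.
Hypothesis Hzero : forall x, w s0 x = 0 /\ W1 s0 x = 0.

Lemma iterated_estimate (k : nat) : forall x n s,
  walk nbrs n x p -> a <= s <= b ->
  Rabs (w s x) <= iter_bound B D alpha n k * (s - s0) ^ (2 * k) / INR (fact (2 * k)).
Proof.
  induction k as [|k IH]; intros x n s W Hs.
  - unfold iter_bound; simpl; rewrite !Rplus_0_r, Rmult_0_r, Rplus_0_l.
    replace (B * 1 * Rpower (INR n + 1) ((2 - alpha) * INR n) * 1 / 1)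
      with (B * Rpower (INR n + 1) ((2 - alpha) * INR n)) by field.
    now apply Hgrowth.
  - set (K := 2 * Deg G x * iter_bound B D alpha (S n) k).
    assert (Hcmp : Rabs (w s x) <= K * (s - s0) ^ S (S (2 * k)) / INR (fact (S (S (2 * k))))).
    { apply (taylor_comparison (fun s => w s x) (fun s => W1 s x) (fun r => Lap G (w r) x));
        [|apply Hzero|apply Hzero].
      intros r Hr. pose proof (segment_in a b s0 s r Hs0 Hs Hr) as Hr'.
      destruct (Hwave x r Hr') as [D1 D2]; refine (conj D1 (conj D2 _)).
      pose proof (INR_fact_lt_0 (2 * k)). pose proof (even_pow_nonneg (r - s0) k).
      set (M := iter_bound B D alpha (S n) k * (r - s0) ^ (2 * k) / INR (fact (2 * k))).
      replace (K * (r - s0) ^ (2 * k) / INR (fact (2 * k))) with (2 * M * Deg G x)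
        by (unfold M, K; field; lra).
      apply Lap_bound.
      + intros y Hy; apply IH; auto; now apply walk_adj with x.
      + eapply Rle_trans; [exact (IH x n r W Hr')|]. unfold M, Rdiv.
        apply Rmult_le_compat_r; [left; now apply Rinv_0_lt_compat|].
        apply Rmult_le_compat_r; auto; apply iter_bound_mono. }
    eapply Rle_trans; [exact Hcmp|].
    replace (2 * S k)%nat with (S (S (2 * k))) by lia.
    unfold Rdiv; apply Rmult_le_compat_r; [left; apply Rinv_0_lt_compat, INR_fact_lt_0|].
    apply Rmult_le_compat_r.
    + replace (S (S (2 * k))) with (2 * S k)%nat by lia; apply even_pow_nonneg.
    + apply iter_bound_step, Hdeg, W.
Qed.

Lemma iter_bound_geometric (n k : nat) (t : R) : (n + 1 <= k)%nat ->
  iter_bound B D alpha n k * t ^ (2 * k) / INR (fact (2 * k)) <=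
  B * INR (fact (2 * n)) * (2 * D * exp 4 * t ^ 2) ^ k.
Proof.
  intros Hk. pose proof (pos_INR n); pose proof (pos_INR k).
  pose proof (INR_fact_lt_0 (2 * k)); pose proof (INR_fact_lt_0 (2 * n)).
  set (Y := INR (2 * k)).
  assert (HY : INR n + INR k + 1 <= Y /\ 1 <= Y).
  { unfold Y; rewrite mult_INR; apply le_INR in Hk; rewrite plus_INR in Hk.
    simpl in *; lra. }
  assert (Hpow : Rpower (INR n + INR k + 1) (2 * INR k + (2 - alpha) * INR n)
                 <= Y ^ (2 * k) * Y ^ (2 * n)).
  { rewrite <- pow_add, <- Rpower_pow by lra.
    apply Rpower_mono; [lra| |apply pos_INR].
    rewrite plus_INR, !mult_INR; simpl; nra. }
  assert (HYk : Y ^ (2 * k) <= INR (fact (2 * k)) * exp Y) by (apply pow_le_fact_exp; lra).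
  assert (HYn : Y ^ (2 * n) <= INR (fact (2 * n)) * exp Y) by (apply pow_le_fact_exp; lra).
  assert (HexpY : exp Y * exp Y = exp 4 ^ k).
  { rewrite <- exp_plus, <- exp_mult_INR; f_equal; unfold Y; rewrite mult_INR; simpl; ring. }
  assert (P0 : 0 <= B * (2 * D) ^ k * t ^ (2 * k)).
  { apply Rmult_le_pos; [apply Rmult_le_pos, pow_le|apply even_pow_nonneg]; lra. }
  unfold iter_bound.
  apply Rle_trans with
    (B * (2 * D) ^ k * t ^ (2 * k) *
     ((INR (fact (2 * k)) * exp Y) * (INR (fact (2 * n)) * exp Y)) / INR (fact (2 * k))).
  - unfold Rdiv; apply Rmult_le_compat_r; [left; now apply Rinv_0_lt_compat|].
    set (P := Rpower (INR n + INR k + 1) (2 * INR k + (2 - alpha) * INR n)) in *.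
    replace (B * (2 * D) ^ k * P * t ^ (2 * k)) with (B * (2 * D) ^ k * t ^ (2 * k) * P)
      by ring.
    apply Rmult_le_compat_l; auto.
    eapply Rle_trans; [exact Hpow|].
    apply Rmult_le_compat; auto; apply pow_le; lra.
  - right. rewrite !Rpow_mult_distr, <- HexpY, <- pow_mult.
    field; lra.
Qed.

(* On a window of length tau(D) around s0 the ratio 2 D e^4 (s-s0)^2 is < 1,
   so w vanishes there. *)
Lemma vanish_window (x : V G) (s : R) :
  a <= s <= b -> Rabs (s - s0) <= tau D -> w s x = 0.
Proof.
  intros Hs Hss. destruct (connected G x p) as [n W].
  set (q := 2 * D * exp 4 * (s - s0) ^ 2).
  assert (Hq : 0 <= q < 1).
  { assert (Hsq : (s - s0) ^ 2 <= tau D ^ 2).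
    { rewrite <- pow2_abs; apply pow_incr; split; [apply Rabs_pos | auto]. }
    assert (He4 : exp 4 = (exp 1 ^ 2) ^ 2).
    { rewrite <- !exp_mult_INR; f_equal; simpl; ring. }
    assert (Htau : exp 4 * tau D ^ 2 * (4 * (D + 1) ^ 2) = 1).
    { unfold tau; rewrite He4; pose proof (exp_pos 1); field; nra. }
    assert (Hc : 0 < exp 4 * tau D ^ 2)
      by (apply Rmult_lt_0_compat; [apply exp_pos | apply pow_lt, tau_pos]).
    assert (Hratio : 2 * D * (exp 4 * tau D ^ 2) < 1).
    { rewrite <- Htau, (Rmult_comm _ (4 * _)); apply Rmult_lt_compat_r; nra. }
    unfold q; split.
    - apply Rmult_le_pos; [pose proof (exp_pos 4); nra | apply pow2_ge_0].
    - apply Rle_lt_trans with (2 * D * (exp 4 * tau D ^ 2)); [|exact Hratio].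
      rewrite <- Rmult_assoc; apply Rmult_le_compat_l; [pose proof (exp_pos 4); nra | exact Hsq]. }
  apply Rabs_eq_0, Rle_antisym; [|apply Rabs_pos].
  apply (geometric_domination _ (B * INR (fact (2 * n))) q (n + 1)); auto.
  - apply Rmult_le_pos; [lra | apply pos_INR].
  - intros k Hk. eapply Rle_trans; [exact (iterated_estimate k x n s W Hs)|].
    now apply iter_bound_geometric.
Qed.

Lemma vanish_velocity (s : R) (y : V G) :
  a <= s <= b -> (forall r, Rmin s0 s <= r <= Rmax s0 s -> forall z, w r z = 0) ->
  W1 s y = 0.
Proof.
  intros Hs Hw.
  destruct (MVT_gen (fun r => W1 r y) s0 s (fun r => Lap G (w r) y)) as [c [Hc Hmvt]].
  - intros r Hr; apply Hwave, (segment_in a b s0 s); auto; lra.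
  - intros r Hr; apply (is_derive_continuity_pt _ _ (Lap G (w r) y)), Hwave.
    now apply (segment_in a b s0 s).
  - rewrite Lap_zero in Hmvt by now apply Hw.
    destruct (Hzero y) as [_ HW1]; lra.
Qed.

Lemma zero_data_window (s : R) :
  a <= s <= b -> Rabs (s - s0) <= tau D -> forall x, w s x = 0 /\ W1 s x = 0.
Proof.
  intros Hs Hss x; split; [now apply vanish_window|].
  apply vanish_velocity; auto. intros r Hr z. apply vanish_window.
  - now apply (segment_in a b s0 s).
  - eapply Rle_trans; [apply (segment_dist s0 s r Hr) | exact Hss].
Qed.

End FromZeroData.

(* Stepping windows: zero data at time 0 give zero data at every s in [a,b]
   with |s| <= j tau; the intermediate time is s j/(j+1). *)
Lemma zero_data_steps (j : nat) : a <= 0 <= b ->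
  (forall x, w 0 x = 0 /\ W1 0 x = 0) ->
  forall s, a <= s <= b -> Rabs s <= INR j * tau D ->
  forall x, w s x = 0 /\ W1 s x = 0.
Proof.
  intros H0 Hz0. pose proof tau_pos.
  induction j as [|j IH]; intros s Hs Hsj.
  - simpl in Hsj; rewrite Rmult_0_l in Hsj.
    replace s with 0 by (symmetry; apply Rabs_eq_0; pose proof (Rabs_pos s); lra).
    exact Hz0.
  - pose proof (pos_INR j). rewrite S_INR in Hsj.
    set (l := INR j / (INR j + 1)).
    assert (Hl : 0 <= l <= 1 /\ 1 - l = / (INR j + 1)).
    { unfold l; split; [split|field; lra].
      - apply Rdiv_le_0_compat; lra.
      - apply Rmult_le_reg_r with (INR j + 1); [lra|]; field_simplify; lra. }
    assert (Hs0 : a <= s * l <= b)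
      by (destruct (Rle_dec 0 s); split; nra).
    apply (zero_data_window (s * l)); auto.
    + apply IH; auto. rewrite Rabs_mult, (Rabs_pos_eq l) by lra.
      unfold l; apply Rmult_le_reg_r with (INR j + 1); [lra|].
      field_simplify; [nra|lra].
    + replace (s - s * l) with (s * (1 - l)) by ring.
      rewrite Rabs_mult, (Rabs_pos_eq (1 - l)) by lra.
      destruct Hl as [_ ->]. apply Rmult_le_reg_r with (INR j + 1); [lra|].
      field_simplify; lra.
Qed.

Theorem homogeneous_vanishes : a <= 0 <= b ->
  (forall x, w 0 x = 0 /\ W1 0 x = 0) ->
  forall s x, a <= s <= b -> w s x = 0.
Proof.
  intros H0 Hz0 s x Hs. pose proof tau_pos.
  destruct (INR_unbounded (Rabs s / tau D)) as [j Hj].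
  apply (zero_data_steps j); auto.
  apply Rmult_gt_compat_r with (r := tau D) in Hj; auto.
  unfold Rdiv in Hj; rewrite Rmult_assoc, Rinv_l, Rmult_1_r in Hj; lra.
Qed.

End Vanishing.

(** From the hypotheses of the theorem to those of [homogeneous_vanishes] *)

Lemma wave_difference (G : wgraph) (T : Rbar) (f : R -> V G -> R)
  (g h : V G -> R) (u v : R -> V G -> R) (a b : R) :
  wave_sol G T f g h u -> wave_sol G T f g h v ->
  (forall r, a <= r <= b -> inI T r) ->
  wave_system G a b (fun s y => u s y - v s y)
    (fun s y => Derive (fun s => u s y) s - Derive (fun s => v s y) s).
Proof.
  intros [Cu [Ueq _]] [Cv [Veq _]] HI y r Hr.
  destruct (Cu y r (HI r Hr)) as [U1 [U2 _]].
  destruct (Cv y r (HI r Hr)) as [V1 [V2 _]]. split.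
  - exact (is_derive_minus _ _ _ _ _ (Derive_correct _ _ U1) (Derive_correct _ _ V1)).
  - rewrite Lap_minus.
    replace (Lap G (u r) y - Lap G (v r) y) with
      (Derive (Derive (fun s => u s y)) r - Derive (Derive (fun s => v s y)) r)
      by (pose proof (Ueq r y (HI r Hr)) as Hu2; pose proof (Veq r y (HI r Hr)) as Hv2;
          change (Derive_n ?F 2 r) with (Derive (Derive F) r) in Hu2, Hv2; lra).
    exact (is_derive_minus _ _ _ _ _ (Derive_correct _ _ U2) (Derive_correct _ _ V2)).
Qed.

(* The growth class M_T, restated along walks: a walk of length n from
   x /= p bounds the distance d by 1 <= d <= n. *)
Lemma MT_walk_bound (G : wgraph) (p : V G) (alpha : R) (T : Rbar)
  (u : R -> V G -> R) : alpha <= 2 -> MT G p alpha T u ->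
  exists C, 0 <= C /\ forall r y n, inI T r -> y <> p -> walk nbrs n y p ->
    Rabs (u r y) <= C * Rpower (INR n + 1) ((2 - alpha) * INR n).
Proof.
  intros Ha [C HC]. exists (Rabs C); split; [apply Rabs_pos|].
  intros r y n Hr Hy W. destruct (walk_dist G y p n Hy W) as [d [Hd Hdist]].
  destruct Hd as [Hd1 Hdn]; apply le_INR in Hd1, Hdn; simpl in Hd1.
  assert (Hmono : Rpower (INR d) ((2 - alpha) * INR d) <=
                  Rpower (INR n + 1) ((2 - alpha) * INR n))
    by (apply Rpower_mono; nra).
  pose proof (Rpower_ge_1 (INR d) ((2 - alpha) * INR d) ltac:(lra) ltac:(nra)).
  eapply Rle_trans; [exact (HC r y d Hr Hy Hdist)|].
  apply Rle_trans with (Rabs C * Rpower (INR d) ((2 - alpha) * INR d)).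
  - apply Rmult_le_compat_r; [lra | apply Rle_abs].
  - apply Rmult_le_compat_l; [apply Rabs_pos | exact Hmono].
Qed.

(* The difference of two functions of M_T, continuous in time at p on a
   segment inside (-T,T), obeys the walk growth bound of Section Vanishing
   (at p itself the bound comes from compactness). *)
Lemma difference_growth (G : wgraph) (p : V G) (alpha : R) (T : Rbar)
  (u v : R -> V G -> R) (a b : R) : alpha <= 2 -> a <= b ->
  MT G p alpha T u -> MT G p alpha T v ->
  (forall r, a <= r <= b -> inI T r) ->
  (forall r, a <= r <= b -> continuity_pt (fun s => u s p - v s p) r) ->
  exists B, 0 <= B /\ forall y n r, walk nbrs n y p -> a <= r <= b ->
    Rabs (u r y - v r y) <= B * Rpower (INR n + 1) ((2 - alpha) * INR n).
Proof.
  intros Ha Hab HuM HvM HI Hcont.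
  destruct (MT_walk_bound G p alpha T u Ha HuM) as [Cu [HCu Hu]].
  destruct (MT_walk_bound G p alpha T v Ha HvM) as [Cv [HCv Hv]].
  destruct (continuity_ab_maj (fun r => Rabs (u r p - v r p)) a b Hab) as [rm [Hrm _]].
  { intros r Hr. now apply continuity_pt_filterlim, (continuous_Rabs_comp (fun s => u s p - v s p)),
      continuity_pt_filterlim, Hcont. }
  exists (Cu + Cv + Rabs (u rm p - v rm p)).
  split; [pose proof (Rabs_pos (u rm p - v rm p)); lra|].
  intros y n r W Hr. pose proof (pos_INR n).
  assert (Hge1 : 1 <= Rpower (INR n + 1) ((2 - alpha) * INR n))
    by (apply Rpower_ge_1; nra).
  pose proof (Rabs_pos (u rm p - v rm p)).
  destruct (classic (y = p)) as [->|Hy].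
  - pose proof (Hrm r Hr); simpl in *; nra.
  - pose proof (Hu r y n (HI r Hr) Hy W); pose proof (Hv r y n (HI r Hr) Hy W).
    unfold Rminus at 1; eapply Rle_trans; [apply Rabs_triang|]; rewrite Rabs_Ropp.
    nra.
Qed.

Lemma degree_walk_bound (G : wgraph) (p : V G) (D alpha : R) :
  0 <= alpha ->
  (forall x n, x <> p -> is_dist G x p n -> Deg G x <= D * Rpower (INR n) alpha) ->
  0 <= D ->
  forall x n, walk nbrs n x p ->
    Deg G x <= (D + Rabs (Deg G p)) * Rpower (INR n + 1) alpha.
Proof.
  intros Ha Hdeg HD x n W. pose proof (pos_INR n).
  pose proof (Rpower_ge_1 (INR n + 1) alpha ltac:(lra) Ha).
  pose proof (Rabs_pos (Deg G p)).
  destruct (classic (x = p)) as [->|Hx].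
  - pose proof (Rle_abs (Deg G p)); nra.
  - destruct (walk_dist G x p n Hx W) as [d [Hd Hdist]].
    destruct Hd as [Hd1 Hdn]; apply le_INR in Hd1, Hdn; simpl in Hd1.
    assert (Rpower (INR d) alpha <= Rpower (INR n + 1) alpha)
      by (apply Rpower_mono; lra).
    pose proof (Hdeg x d Hx Hdist); nra.
Qed.

Theorem theorem1p2 (G : wgraph) (p : V G) (D alpha : R) (T : Rbar)
  (HD : 0 < D) (Ha0 : 0 <= alpha) (Ha2 : alpha <= 2)
  (Hdeg : forall (x : V G) (n : nat), x <> p -> is_dist G x p n ->
            Deg G x <= D * Rpower (INR n) alpha)
  (HT : Rbar_lt 0 T)
  (f : R -> V G -> R) (g h : V G -> R) (u v : R -> V G -> R)
  (Hf : C0t G T f)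
  (HuM : MT G p alpha T u) (HvM : MT G p alpha T v)
  (Hu : wave_sol G T f g h u) (Hv : wave_sol G T f g h v) :
  forall t x, inI T t -> u t x = v t x.
Proof.
  intros t x Ht.
  set (a := Rmin 0 t); set (b := Rmax 0 t).
  assert (Hab : a <= 0 <= b /\ a <= t <= b)
    by (unfold a, b, Rmin, Rmax; destruct Rle_dec; lra).
  assert (HI : forall r, a <= r <= b -> inI T r).
  { intros r Hr; destruct T as [T'| |]; unfold inI in *; simpl in *; try tauto.
    revert Hr; unfold a, b, Rmin, Rmax; destruct Rle_dec; lra. }
  pose proof (wave_difference G T f g h u v a b Hu Hv HI) as Hwave.
  destruct (difference_growth G p alpha T u v a b Ha2 ltac:(lra) HuM HvM HI) as [B [HB Hgrowth]].
  { intros r Hr; eapply is_derive_continuity_pt, (Hwave p r Hr). }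
  assert (Hzero : forall y, u 0 y - v 0 y = 0 /\
            Derive (fun s => u s y) 0 - Derive (fun s => v s y) 0 = 0).
  { destruct Hu as [_ [_ [Ug Uh]]]; destruct Hv as [_ [_ [Vg Vh]]].
    intros y; rewrite Ug, Vg, Uh, Vh; split; ring. }
  apply Rminus_diag_uniq.
  refine (homogeneous_vanishes G p a b alpha B (D + Rabs (Deg G p)) _ _ _ _ _ Hwave
            Hgrowth _ (proj1 Hab) Hzero t x (proj2 Hab)); auto.
  - pose proof (Rabs_pos (Deg G p)); lra.
  - apply degree_walk_bound; auto; lra.
Qed.
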